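(* Let $G=(V,E)$ be a connected graph with positive edge costs $c:E\to\mathbb{R}_+$, let $\alpha\ge1$, and let $(U,\complement{U})$ be an $\alpha$-approximate minimum cut of $G$. Let $\mathcal{C}=\{Q\subsetneq V:\complement{U}\subsetneq Q,\ d(Q)\le d(U)\}$ and suppose $\mathcal{C}\ne\emptyset$. Let $S\subseteq U$ be a minimal (with respect to inclusion) set such that $S\cap Q\ne\emptyset$ for all $Q\in\mathcal{C}$. Then $(U,\complement{U})$ is the unique minimum $(S,\complement{U})$-terminal cut.
   Context: A cut is a partition of $V$ into two non-empty parts; for $\emptyset\ne U\subsetneq V$ write $\complement{U}=V\setminus U$ and $d(U)$ for the total cost of edges with exactly one endpoint in $U$. Let $\lambda=\min\{d(U):\emptyset\ne U\subsetneq V\}$; $(U,\complement{U})$ is an $\alpha$-approximate minimum cut if $d(U)\le\alpha\lambda$. For disjoint non-empty $S,T\subseteq V$, a cut $(X,\complement{X})$ is an $(S,T)$-terminal cut if $S\subseteq X\subseteq V\setminus T$; a minimum $(S,T)$-terminal cut is one minimizing $d(X)$ among these. *)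

From HB Require Import structures.
From mathcomp Require Import all_boot all_order all_algebra.
Set Implicit Arguments. Unset Strict Implicit. Unset Printing Implicit Defensive.
Import Order.TTheory GRing.Theory Num.Theory.
Local Open Scope ring_scope.

Section Cuts.
Variables (R : realFieldType) (V : finType) (e : rel V) (c : V -> V -> R).

Definition simple_graph := symmetric e /\ irreflexive e.
Definition sym_cost := forall x y, c x y = c y x.
Definition pos_costs := forall x y, e x y -> 0 < c x y.
Definition connected_graph := forall x y : V, connect e x y.

(* d(U): total cost of edges with exactly one endpoint in U (each edge
   counted once, via its endpoint in U). *)
Definition d (U : {set V}) : R :=
  \sum_(x in U) \sum_(y in ~: U | e x y) c x y.

Definition is_cut (U : {set V}) : bool := (U != set0) && (U \proper setT).

Definition is_min_cut_value (lam : R) :=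
  (exists U, is_cut U /\ d U = lam) /\ (forall U, is_cut U -> lam <= d U).

Definition approx_min_cut (alpha lam : R) (U : {set V}) :=
  is_min_cut_value lam /\ is_cut U /\ d U <= alpha * lam.

Definition terminal_cut (S T X : {set V}) : bool :=
  is_cut X && (S \subset X) && (X \subset ~: T).

Definition min_terminal_cut (S T X : {set V}) :=
  terminal_cut S T X /\ forall Y, terminal_cut S T Y -> d X <= d Y.

Definition unique_min_terminal_cut (S T X : {set V}) :=
  min_terminal_cut S T X /\ forall Y, min_terminal_cut S T Y -> Y = X.

Definition inC (U Q : {set V}) : bool :=
  (Q \proper setT) && (~: U \proper Q) && (d Q <= d U).

Definition hits_C (U S : {set V}) : bool :=
  [forall Q : {set V}, inC U Q ==> (S :&: Q != set0)].

End Cuts.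

From HB Require Import structures.
From mathcomp Require Import all_boot all_order all_algebra.
Set Implicit Arguments. Unset Strict Implicit. Unset Printing Implicit Defensive.
Import Order.TTheory GRing.Theory Num.Theory.
Local Open Scope ring_scope.

(* A terminal cut Y other than U has S ⊆ Y ⊊ U, so its complement strictly
   contains ~U; if also d(Y) <= d(U), then ~Y would belong to C while missing
   S, contradicting that S hits C.  Hence U is strictly cheaper than every
   other (S, ~U)-terminal cut. *)

Section TerminalCuts.
Variables (R : realFieldType) (V : finType) (e : rel V) (c : V -> V -> R).
Hypotheses (se : symmetric e) (sc : sym_cost c).

Lemma d_setC (Y : {set V}) : d e c (~: Y) = d e c Y.
Proof.
rewrite /d setCK.
rewrite (exchange_big_dep (fun y => y \in Y)) /=; last by move=> i j _ /andP[].
apply: eq_bigr => y Yy; apply: eq_big => x; first by rewrite Yy se.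
by move=> _; rewrite sc.
Qed.

Lemma unique_min_terminal_cut_strict (S T X : {set V}) :
  terminal_cut S T X ->
  (forall Y, terminal_cut S T Y -> Y != X -> d e c X < d e c Y) ->
  unique_min_terminal_cut e c S T X.
Proof.
move=> tX ltX; have minX : min_terminal_cut e c S T X.
  split=> // Y tY; have [-> // | neqYX] := eqVneq Y X.
  exact/ltW/ltX.
split=> // Y [tY minY]; apply/eqP; apply: contraT => neqYX.
by have := minY X tX; rewrite leNgt ltX.
Qed.

Lemma inC_setC (U Y : {set V}) :
  is_cut Y -> Y \proper U -> d e c Y <= d e c U -> inC e c U (~: Y).
Proof.
move=> /andP[Y0 _] ltYU leYU.
by rewrite /inC d_setC properC properT -setC0 (inj_eq (@setC_inj _)) Y0 ltYU.
Qed.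

Lemma terminal_cut_d_gt (U S Y : {set V}) :
  hits_C e c U S -> terminal_cut S (~: U) Y -> Y != U -> d e c U < d e c Y.
Proof.
move=> /forallP hitS /andP[/andP[cutY SY]]; rewrite setCK => YU neqYU.
rewrite ltNge; apply: contraT; rewrite negbK => leYU.
have ltYU : Y \proper U by rewrite properEneq neqYU YU.
have /implyP/(_ (inC_setC cutY ltYU leYU)) := hitS (~: Y).
by rewrite -setDE setD_eq0 SY.
Qed.

End TerminalCuts.

Theorem proposition2p2 (R : realFieldType) (V : finType) (e : rel V)
  (c : V -> V -> R) (alpha lam : R) (U S : {set V}) :
  simple_graph e -> sym_cost c -> pos_costs e c -> connected_graph e ->
  1 <= alpha ->
  approx_min_cut e c alpha lam U ->
  (exists Q, inC e c U Q) ->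
  S \subset U ->
  minset (hits_C e c U) S ->
  unique_min_terminal_cut e c S (~: U) U.
Proof.
move=> [se _] sc _ _ _ [_ [cutU _]] _ SU /minsetP[hitS _].
apply: unique_min_terminal_cut_strict.
  by rewrite /terminal_cut cutU SU setCK subxx.
by move=> Y; apply: terminal_cut_d_gt.
Qed.
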